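(* Let $0<p\leqslant q:=1-p$, let $\tilde A_k$ be as in the context and let $0<\varepsilon<\pi/2$. Then there exist $\varepsilon'\in(0,1)$ and absolute constants (independent of $k$ and $z$) such that, for $|z|\geqslant1$: (i) for $|\arg(z)|\leqslant\varepsilon$, $\tilde A_k(z)=O\left(|z|^{\varepsilon'}\right)$ uniformly in $z$ and $k\geqslant0$; (ii) for $\varepsilon\leqslant|\arg(z)|\leqslant\pi$, $e^z\tilde A_k(z)=O\left(e^{(1-\varepsilon')|z|}\right)$ uniformly in $z$ and $k\geqslant0$.
   Context: The random variables $X_n$ are defined by $X_0=0$ and $X_n \stackrel{d}{=} X_{I_n}+1$ for $n\geqslant 1$, where $(X_n)$ and $(I_n)$ are independent and $\mathbb{P}(I_n=k)=\binom{n}{k}\frac{p^kq^{n-k}-p^k(q-p)^{n-k}}{1-q^n}$ for $k=0,\dots,n-1$. For $k\geqslant0$, $\tilde A_k(z):=e^{-z}\sum_{n\geqslant0}\mathbb{P}(X_n=k)z^n/n!$ (entire functions). They satisfy $\tilde A_0(z)=e^{-z}$ and $\tilde{A}_{k+1}(z)=\left(1-e^{-pz}\right)\tilde{A}_k(pz)+e^{-pz}\tilde{A}_{k+1}(qz)$ for $k\geqslant0$. *)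

From Stdlib Require Import Reals Lra.
From Coquelicot Require Import Coquelicot.
Open Scope R_scope.

Definition probI (p : R) (n j : nat) : R :=
  let q := 1 - p in
  Binomial.C n j * (p ^ j * q ^ (n - j) - p ^ j * (q - p) ^ (n - j)) / (1 - q ^ n).

(* probX p k n = P(X_n = k), from X_0 = 0 and X_n =d X_{I_n} + 1 (n >= 1),
   with (X_n) and (I_n) independent and I_n in {0,..,n-1}:
   P(X_n = 0) = [n = 0];  P(X_n = k+1) = sum_{j=0}^{n-1} P(I_n = j) P(X_j = k) (n>=1). *)
Fixpoint probX (p : R) (k : nat) (n : nat) : R :=
  match k with
  | O => match n with O => 1 | S _ => 0 end
  | S k' => match n with
            | O => 0
            | S m => sum_f_R0 (fun j => probI p n j * probX p k' j) m
            end
  end.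

Definition Cexp (z : C) : C :=
  (exp (Re z) * cos (Im z), exp (Re z) * sin (Im z)).

Definition Aterm (p : R) (k : nat) (z : C) (n : nat) : C :=
  Cmult (RtoC (probX p k n / INR (Factorial.fact n))) (pow_n z n).

(* sum_{n>=0} P(X_n = k) z^n / n!  (an everywhere convergent series),
   computed as Series of real part + i Series of imaginary part *)
Definition Aseries (p : R) (k : nat) (z : C) : C :=
  (Series (fun n => Re (Aterm p k z n)), Series (fun n => Im (Aterm p k z n))).

Definition Atilde (p : R) (k : nat) (z : C) : C :=
  Cmult (Cexp (Copp z)) (Aseries p k z).

Definition has_arg (z : C) (theta : R) : Prop :=
  z = (Cmod z * cos theta, Cmod z * sin theta).

From Stdlib Require Import Reals Lra Lia.
From Coquelicot Require Import Coquelicot.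
Open Scope R_scope.

(* Let [G_k(z) = e^z Atilde_k(z) = sum_n P(X_n = k) z^n / n!] ([Aseries]).  Since
   [0 <= P(X_n = k) <= 1], [|G_k(z)| <= e^|z|]; and comparing Taylor coefficients, the recursion
   for [X_n] becomes [G_(k+1)(z) = G_(k+1)(q z) + (e^(q z) - e^((q-p) z)) G_k(p z)], which is the
   recurrence of [Atilde] in the statement.  Both bounds are then proved by induction on [k] and,
   for fixed [k], on the number of contractions [z |-> q z] needed to reach a fixed disc, where
   the crude bound applies:
   - in the sector [Re z >= c |z|], [c = cos eps], [|e^(-p z)|] is small for large [|z|] and is
     absorbed by the factor [p^eps'] won on [Atilde_k(p z)];
   - outside it, [G_(k+1)(q z)] costs a factor [e^(-(1-eps') p |z|)] and the other term is of
     order [e^((q c + p) |z|)] with [q c + p < 1]. *)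

(** * Complex series *)

Definition CSeries (u : nat -> C) : C :=
  (Series (fun n => Re (u n)), Series (fun n => Im (u n))).

Definition is_CSeries (u : nat -> C) (l : C) : Prop :=
  is_series (fun n => Re (u n)) (Re l) /\ is_series (fun n => Im (u n)) (Im l).

Lemma is_CSeries_unique u l : is_CSeries u l -> CSeries u = l.
Proof.
  intros [Hre Him]; destruct l as [a b]; unfold CSeries.
  now rewrite (is_series_unique _ _ Hre), (is_series_unique _ _ Him).
Qed.

Lemma is_CSeries_ext u v l : (forall n, u n = v n) -> is_CSeries u l -> is_CSeries v l.
Proof.
  intros Huv [Hre Him]; split; eapply is_series_ext; eauto; intros n; simpl; now rewrite Huv.
Qed.

Lemma is_CSeries_plus u v a b :
  is_CSeries u a -> is_CSeries v b -> is_CSeries (fun n => u n + v n)%C (a + b)%C.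
Proof. intros [Hu1 Hu2] [Hv1 Hv2]; split; now apply (is_series_plus (V := R_NormedModule)). Qed.

Lemma is_CSeries_minus u v a b :
  is_CSeries u a -> is_CSeries v b -> is_CSeries (fun n => u n - v n)%C (a - b)%C.
Proof.
  intros [Hu1 Hu2] [Hv1 Hv2]; split.
  - apply (is_series_ext (fun n => Re (u n) - Re (v n))).
    + intros n; unfold Re, Im; simpl; ring.
    + replace (Re (a - b)) with (Re a - Re b) by (unfold Re, Im; simpl; ring).
      now apply (is_series_minus (V := R_NormedModule)).
  - apply (is_series_ext (fun n => Im (u n) - Im (v n))).
    + intros n; unfold Re, Im; simpl; ring.
    + replace (Im (a - b)) with (Im a - Im b) by (unfold Re, Im; simpl; ring).
      now apply (is_series_minus (V := R_NormedModule)).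
Qed.

Lemma Re_sum_n u n : Re (sum_n u n) = sum_f_R0 (fun k => Re (u k)) n.
Proof.
  rewrite <- sum_n_Reals. induction n as [|n IH].
  - now rewrite !sum_O.
  - rewrite !sum_Sn, <- IH. reflexivity.
Qed.

Lemma Im_sum_n u n : Im (sum_n u n) = sum_f_R0 (fun k => Im (u k)) n.
Proof.
  rewrite <- sum_n_Reals. induction n as [|n IH].
  - now rewrite !sum_O.
  - rewrite !sum_Sn, <- IH. reflexivity.
Qed.

Lemma im_le_Cmod c : Rabs (Im c) <= Cmod c.
Proof. eapply Rle_trans; [apply Rmax_r | apply (Rmax_Cmod c)]. Qed.

Lemma Cmod_le_Rabs_Re_Im c : Cmod c <= Rabs (Re c) + Rabs (Im c).
Proof.
  pose proof (Cmod2_alt c); pose proof (Cmod_ge_0 c).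
  pose proof (pow2_abs (Re c)); pose proof (pow2_abs (Im c)).
  pose proof (Rabs_pos (Re c)); pose proof (Rabs_pos (Im c)).
  nra.
Qed.

Lemma ex_series_Rabs_Re u :
  ex_series (fun n => Cmod (u n)) -> ex_series (fun n => Rabs (Re (u n))).
Proof.
  apply (ex_series_le (K := R_AbsRing) (V := R_CompleteNormedModule)).
  intros n; unfold norm; simpl; unfold abs; simpl; rewrite Rabs_Rabsolu; apply re_le_Cmod.
Qed.

Lemma ex_series_Rabs_Im u :
  ex_series (fun n => Cmod (u n)) -> ex_series (fun n => Rabs (Im (u n))).
Proof.
  apply (ex_series_le (K := R_AbsRing) (V := R_CompleteNormedModule)).
  intros n; unfold norm; simpl; unfold abs; simpl; rewrite Rabs_Rabsolu; apply im_le_Cmod.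
Qed.

Lemma is_CSeries_CSeries u : ex_series (fun n => Cmod (u n)) -> is_CSeries u (CSeries u).
Proof.
  intros Hu; split; apply Series_correct, ex_series_Rabs.
  - now apply ex_series_Rabs_Re.
  - now apply ex_series_Rabs_Im.
Qed.

Lemma is_CSeries_Cauchy u v a b :
  ex_series (fun n => Cmod (u n)) -> ex_series (fun n => Cmod (v n)) ->
  is_CSeries u a -> is_CSeries v b ->
  is_CSeries (fun n => sum_n (fun k => u k * v (n - k)%nat)%C n) (a * b)%C.
Proof.
  intros Hu Hv [Hu1 Hu2] [Hv1 Hv2].
  pose proof (ex_series_Rabs_Re u Hu); pose proof (ex_series_Rabs_Im u Hu).
  pose proof (ex_series_Rabs_Re v Hv); pose proof (ex_series_Rabs_Im v Hv).
  split.
  - eapply is_series_ext;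
      [| apply (is_series_minus (V := R_NormedModule));
         [apply (is_series_mult _ _ _ _ Hu1 Hv1) | apply (is_series_mult _ _ _ _ Hu2 Hv2)]; auto].
    intros n; change (plus ?x (opp ?y)) with (x - y).
    rewrite Re_sum_n, <- minus_sum; apply sum_eq; intros k _.
    unfold Re, Im; simpl; ring.
  - eapply is_series_ext;
      [| apply (is_series_plus (V := R_NormedModule));
         [apply (is_series_mult _ _ _ _ Hu1 Hv2) | apply (is_series_mult _ _ _ _ Hu2 Hv1)]; auto].
    intros n; change (plus ?x ?y) with (x + y).
    rewrite Im_sum_n, <- sum_plus; apply sum_eq; intros k _.
    unfold Re, Im; simpl; ring.
Qed.

Lemma Cmod_CSeries_le u l :
  is_CSeries u l -> ex_series (fun n => Cmod (u n)) -> Cmod l <= Series (fun n => Cmod (u n)).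
Proof.
  intros [Hre Him] Habs.
  apply Series_correct, is_series_Reals in Habs.
  apply is_series_Reals in Hre; apply is_series_Reals in Him.
  apply Rle_plus_epsilon; intros eps Heps.
  destruct (Hre (eps / 2)) as [N1 HN1]; [lra|].
  destruct (Him (eps / 2)) as [N2 HN2]; [lra|].
  set (N := max N1 N2).
  specialize (HN1 N ltac:(lia)); specialize (HN2 N ltac:(lia)).
  rewrite <- Re_sum_n in HN1; rewrite <- Im_sum_n in HN2; unfold R_dist in *.
  set (s := sum_n u N) in *.
  assert (Hs : Cmod s <= Series (fun n => Cmod (u n))).
  { apply Rle_trans with (sum_n (fun n => Cmod (u n)) N).
    - apply (norm_sum_n_m (V := C_NormedModule) u 0 N).
    - rewrite sum_n_Reals; apply (sum_incr _ _ _ Habs); intros n; apply Cmod_ge_0. }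
  replace l with (l - s + s)%C by ring.
  pose proof (Cmod_le_Rabs_Re_Im (l - s)%C) as Hls.
  replace (Re (l - s)%C) with (- (Re s - Re l)) in Hls by (unfold Re; simpl; ring).
  replace (Im (l - s)%C) with (- (Im s - Im l)) in Hls by (unfold Im; simpl; ring).
  rewrite !Rabs_Ropp in Hls.
  pose proof (Cmod_triangle (l - s)%C s); lra.
Qed.

Lemma is_series_zero : is_series (fun _ => 0) 0.
Proof.
  apply is_series_Reals; intros eps Heps; exists O; intros n _.
  rewrite sum_cte, Rmult_0_l; unfold R_dist; rewrite Rminus_0_r, Rabs_R0; exact Heps.
Qed.

Lemma Re_RtoC_mult t w : Re (RtoC t * w) = t * Re w.
Proof. unfold Re, Im; simpl; ring. Qed.

Lemma Im_RtoC_mult t w : Im (RtoC t * w) = t * Im w.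
Proof. unfold Re, Im; simpl; ring. Qed.

Lemma Cmod_RtoC_mult t w : 0 <= t -> Cmod (RtoC t * w) = t * Cmod w.
Proof. intros Ht; rewrite Cmod_mult, Cmod_R, Rabs_pos_eq; auto. Qed.

(** * The exponential series *)

Lemma Cexp_add a b : Cexp (a + b) = (Cexp a * Cexp b)%C.
Proof.
  unfold Cexp. replace (Re (a + b)) with (Re a + Re b) by reflexivity.
  replace (Im (a + b)) with (Im a + Im b) by reflexivity.
  rewrite exp_plus, cos_plus, sin_plus.
  apply injective_projections; simpl; ring.
Qed.

Lemma Cexp_0 : Cexp 0 = 1%C.
Proof.
  unfold Cexp; simpl; rewrite exp_0, cos_0, sin_0.
  apply injective_projections; simpl; ring.
Qed.

Lemma Cmod_Cexp w : Cmod (Cexp w) = exp (Re w).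
Proof.
  unfold Cmod, Cexp; cbn [fst snd].
  replace ((exp (Re w) * cos (Im w)) ^ 2 + (exp (Re w) * sin (Im w)) ^ 2) with (exp (Re w) ^ 2).
  - apply sqrt_pow2; left; apply exp_pos.
  - pose proof (sin2_cos2 (Im w)); unfold Rsqr in *; nra.
Qed.

Lemma Cmod_Cexp_neg_RtoC_mult t w : Cmod (Cexp (- (RtoC t * w))) = exp (- (t * Re w)).
Proof. rewrite Cmod_Cexp; f_equal; unfold Re; simpl; ring. Qed.

Definition Cexp_term (w : C) (n : nat) : C := (RtoC (/ INR (Factorial.fact n)) * w ^ n)%C.

Lemma Cmod_Cexp_term w n : Cmod (Cexp_term w n) = / INR (Factorial.fact n) * Cmod w ^ n.
Proof.
  unfold Cexp_term; rewrite Cmod_RtoC_mult, Cmod_pow; auto.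
  left; apply Rinv_0_lt_compat, INR_fact_lt_0.
Qed.

Lemma is_series_exp x : is_series (fun n => / INR (Factorial.fact n) * x ^ n) (exp x).
Proof.
  eapply is_series_ext; [| apply (is_exp_Reals x)].
  intros n; simpl; rewrite pow_n_pow; apply Rmult_comm.
Qed.

Lemma ex_series_Cmod_Cexp_term w : ex_series (fun n => Cmod (Cexp_term w n)).
Proof.
  exists (exp (Cmod w)); eapply is_series_ext; [| apply is_series_exp].
  intros n; now rewrite Cmod_Cexp_term.
Qed.

Lemma Cexp_RtoC x : Cexp (RtoC x) = RtoC (exp x).
Proof.
  unfold Cexp; simpl; rewrite cos_0, sin_0.
  apply injective_projections; simpl; ring.
Qed.

Lemma is_CSeries_Cexp_real x : is_CSeries (Cexp_term (RtoC x)) (Cexp (RtoC x)).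
Proof.
  rewrite Cexp_RtoC; split.
  - eapply is_series_ext; [| apply is_series_exp].
    intros n; unfold Cexp_term; rewrite <- RtoC_pow, <- RtoC_mult; reflexivity.
  - eapply is_series_ext; [| apply is_series_zero].
    intros n; unfold Cexp_term; rewrite <- RtoC_pow, <- RtoC_mult; reflexivity.
Qed.

Lemma Ci_pow_even n : (Ci ^ (2 * n))%C = RtoC ((-1) ^ n).
Proof.
  rewrite Cpow_mult_r, RtoC_pow; f_equal.
  apply injective_projections; simpl; ring.
Qed.

Lemma Ci_pow_odd n : (Ci ^ (2 * n + 1))%C = (RtoC ((-1) ^ n) * Ci)%C.
Proof. now rewrite Cpow_add_r, Ci_pow_even, Cpow_1_r. Qed.

Lemma is_series_cos y : is_series (fun n => cos_n n * (y ^ 2) ^ n) (cos y).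
Proof.
  unfold cos; destruct (exist_cos (Rsqr y)) as [l Hl].
  rewrite <- Rsqr_pow2; now apply is_series_Reals.
Qed.

Lemma is_series_sin y :
  exists l, is_series (fun n => sin_n n * (y ^ 2) ^ n) l /\ sin y = y * l.
Proof.
  unfold sin; destruct (exist_sin (Rsqr y)) as [l Hl].
  exists l; rewrite <- Rsqr_pow2; split; [now apply is_series_Reals | reflexivity].
Qed.

Lemma Cexp_term_Ci_mult y n :
  Cexp_term (RtoC y * Ci) n = (RtoC (/ INR (Factorial.fact n) * y ^ n) * Ci ^ n)%C.
Proof. unfold Cexp_term; rewrite Cpow_mult_l, <- RtoC_pow, RtoC_mult; ring. Qed.

Lemma is_pseries_Reals (a : nat -> R) x l :
  is_pseries a x l <-> is_series (fun n => a n * x ^ n) l.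
Proof.
  split; intros H; (eapply is_series_ext; [| exact H]);
    intros n; rewrite pow_n_pow; apply Rmult_comm.
Qed.

Lemma Cexp_imag y : Cexp (RtoC y * Ci) = (cos y, sin y).
Proof.
  unfold Cexp; replace (Re (RtoC y * Ci)) with 0 by (unfold Re; simpl; ring).
  replace (Im (RtoC y * Ci)) with y by (unfold Im; simpl; ring).
  rewrite exp_0; apply injective_projections; simpl; ring.
Qed.

(* The even and odd terms are the series by which Stdlib defines [cos] and [sin]. *)
Lemma is_CSeries_Cexp_imag y : is_CSeries (Cexp_term (RtoC y * Ci)) (Cexp (RtoC y * Ci)).
Proof.
  rewrite Cexp_imag.
  split.
  - assert (H : is_pseries (fun n => / INR (Factorial.fact n) * Re (Ci ^ n)) y (cos y + y * 0)).
    { apply is_pseries_odd_even; apply is_pseries_Reals.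
      - eapply is_series_ext; [| apply is_series_cos].
        intros n; rewrite Ci_pow_even; unfold cos_n, Rdiv; simpl; ring.
      - eapply is_series_ext; [| apply is_series_zero].
        intros n; rewrite Ci_pow_odd, Re_RtoC_mult; simpl; ring. }
    rewrite Rmult_0_r, Rplus_0_r, is_pseries_Reals in H.
    eapply is_series_ext; [| exact H].
    intros n; rewrite Cexp_term_Ci_mult, Re_RtoC_mult; simpl; ring.
  - destruct (is_series_sin y) as [l [Hl Hsin]].
    assert (H : is_pseries (fun n => / INR (Factorial.fact n) * Im (Ci ^ n)) y (0 + y * l)).
    { apply is_pseries_odd_even; apply is_pseries_Reals.
      - eapply is_series_ext; [| apply is_series_zero].
        intros n; rewrite Ci_pow_even; simpl; ring.
      - eapply is_series_ext; [| exact Hl].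
        intros n; rewrite Ci_pow_odd, Im_RtoC_mult; unfold sin_n, Rdiv; simpl; ring. }
    rewrite Rplus_0_l, <- Hsin, is_pseries_Reals in H.
    eapply is_series_ext; [| exact H].
    intros n; rewrite Cexp_term_Ci_mult, Im_RtoC_mult; simpl; ring.
Qed.

(* [Binomial.C n k] is not [0] for [k > n]; extending by [0] makes Pascal's rule hold
   at the boundary. *)
Definition choose (n k : nat) : R := if (k <=? n)%nat then Binomial.C n k else 0.

Lemma choose_0 n : choose n 0 = 1.
Proof. apply C_n_0. Qed.

Lemma choose_gt n k : (n < k)%nat -> choose n k = 0.
Proof. intros H; unfold choose; now replace (k <=? n)%nat with false by (symmetry; apply Nat.leb_gt, H). Qed.

Lemma choose_pascal n k : choose (S n) (S k) = choose n k + choose n (S k).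
Proof.
  destruct (Nat.lt_trichotomy k n) as [H | [-> | H]].
  - unfold choose.
    replace (S k <=? S n)%nat with true by (symmetry; apply Nat.leb_le; lia).
    replace (k <=? n)%nat with true by (symmetry; apply Nat.leb_le; lia).
    replace (S k <=? n)%nat with true by (symmetry; apply Nat.leb_le; lia).
    symmetry; now apply pascal.
  - rewrite (choose_gt n (S n)) by lia; unfold choose; rewrite !Nat.leb_refl, !C_n_n; ring.
  - rewrite !choose_gt by lia; ring.
Qed.

(* Coquelicot's [sum_n] lemmas, restated with [Cplus]/[Cmult] at type [C] so that [ring]
   applies to their premises and conclusions. *)
Lemma sum_n_C_ext (u v : nat -> C) n :
  (forall k, (k <= n)%nat -> u k = v k) -> sum_n u n = sum_n v n.
Proof. apply (sum_n_ext_loc (G := C_AbelianMonoid)). Qed.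

Lemma sum_n_C_Sn (u : nat -> C) n : sum_n u (S n) = (sum_n u n + u (S n))%C.
Proof. apply (sum_Sn (G := C_AbelianMonoid)). Qed.

Lemma sum_n_C_shift (u : nat -> C) n : sum_n u (S n) = (u O + sum_n (fun k => u (S k)) n)%C.
Proof. unfold sum_n; rewrite sum_Sn_m, sum_n_m_S by lia; reflexivity. Qed.

Lemma sum_n_C_plus (u v : nat -> C) n :
  sum_n (fun k => u k + v k)%C n = (sum_n u n + sum_n v n)%C.
Proof. apply (sum_n_plus (G := C_AbelianMonoid)). Qed.

Lemma sum_n_C_mult_l (a : C) (u : nat -> C) n :
  sum_n (fun k => a * u k)%C n = (a * sum_n u n)%C.
Proof. apply (sum_n_mult_l (K := C_Ring)). Qed.

Lemma pow_n_Cpow (z : C) n : pow_n z n = (z ^ n)%C.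
Proof. induction n as [|n IH]; simpl; [reflexivity | now rewrite IH]. Qed.

Lemma sum_n_RtoC (h : nat -> R) n : sum_n (fun j => RtoC (h j)) n = RtoC (sum_f_R0 h n).
Proof.
  induction n as [|n IH]; [now rewrite sum_O|].
  now rewrite sum_n_C_Sn, IH, <- RtoC_plus.
Qed.

Lemma Cpow_binomial a b n :
  ((a + b) ^ n)%C = sum_n (fun k => RtoC (choose n k) * a ^ k * b ^ (n - k))%C n.
Proof.
  induction n as [|n IH].
  - rewrite sum_O, choose_0; simpl; ring.
  - set (T := fun k => (RtoC (choose n (S k)) * a ^ S k * b ^ (n - k))%C).
    assert (Ha : sum_n (fun k => RtoC (choose (S n) (S k)) * a ^ S k * b ^ (S n - S k))%C n
                 = (a * sum_n (fun k => RtoC (choose n k) * a ^ k * b ^ (n - k)) n + sum_n T n)%C).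
    { rewrite <- sum_n_C_mult_l, <- sum_n_C_plus.
      apply sum_n_C_ext; intros k _; unfold T; rewrite choose_pascal, RtoC_plus.
      replace (S n - S k)%nat with (n - k)%nat by lia; simpl; ring. }
    assert (Hb : (b * sum_n (fun k => RtoC (choose n k) * a ^ k * b ^ (n - k)) n)%C
                 = (b ^ S n + sum_n T n)%C).
    { rewrite <- sum_n_C_mult_l.
      transitivity (sum_n (fun k => RtoC (choose n k) * a ^ k * b ^ (S n - k))%C (S n)).
      - rewrite sum_n_C_Sn, choose_gt by lia.
        replace (RtoC 0 * a ^ S n * b ^ (S n - S n))%C with (RtoC 0) by ring.
        rewrite Cplus_0_r; apply sum_n_C_ext; intros k Hk.
        replace (S n - k)%nat with (S (n - k)) by lia; simpl; ring.
      - rewrite sum_n_C_shift, choose_0; simpl; f_equal; ring. }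
    rewrite sum_n_C_shift, choose_0, Ha; simpl (S n - 0)%nat.
    rewrite Cpow_S, IH, Cmult_plus_distr_r, Hb; ring.
Qed.

Lemma Cexp_term_add a b n :
  Cexp_term (a + b) n = sum_n (fun k => Cexp_term a k * Cexp_term b (n - k))%C n.
Proof.
  unfold Cexp_term; rewrite Cpow_binomial, <- sum_n_C_mult_l.
  apply sum_n_C_ext; intros k Hk.
  assert (E : / INR (Factorial.fact n) * choose n k
              = / INR (Factorial.fact k) * / INR (Factorial.fact (n - k))).
  { unfold choose; replace (k <=? n)%nat with true by (symmetry; apply Nat.leb_le, Hk).
    unfold Binomial.C; field; repeat split; apply INR_fact_neq_0. }
  transitivity (RtoC (/ INR (Factorial.fact n) * choose n k) * a ^ k * b ^ (n - k))%C.
  - rewrite RtoC_mult; ring.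
  - rewrite E, RtoC_mult; ring.
Qed.

Lemma is_CSeries_Cexp w : is_CSeries (Cexp_term w) (Cexp w).
Proof.
  replace w with (RtoC (Re w) + RtoC (Im w) * Ci)%C
    by (apply injective_projections; unfold Re, Im; simpl; ring).
  rewrite Cexp_add.
  eapply is_CSeries_ext; [| apply is_CSeries_Cauchy;
    [apply ex_series_Cmod_Cexp_term | apply ex_series_Cmod_Cexp_term
    | apply is_CSeries_Cexp_real | apply is_CSeries_Cexp_imag]].
  intros n; symmetry; apply Cexp_term_add.
Qed.

(** * Real estimates and scaling induction *)

Lemma exp_le x y : x <= y -> exp x <= exp y.
Proof. intros [H | ->]; [left; now apply exp_increasing | apply Rle_refl]. Qed.

Lemma one_le_exp x : 0 <= x -> 1 <= exp x.
Proof. intros Hx; rewrite <- exp_0; now apply exp_le. Qed.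

Lemma exp_le_one x : x <= 0 -> exp x <= 1.
Proof. intros Hx; rewrite <- exp_0; now apply exp_le. Qed.

Lemma exp_neg_le_inv t a : 0 < a -> a <= 1 + t -> exp (- t) <= / a.
Proof.
  intros Ha Hat; rewrite exp_Ropp; apply Rinv_le_contravar; [exact Ha|].
  pose proof (exp_ineq1_le t); lra.
Qed.

Lemma Rpower_1_l e : Rpower 1 e = 1.
Proof. unfold Rpower; rewrite ln_1, Rmult_0_r; apply exp_0. Qed.

Lemma Rpower_lt_1 x e : 0 < x < 1 -> 0 < e -> Rpower x e < 1.
Proof. intros Hx He; rewrite <- (Rpower_1_l e); apply Rlt_Rpower_l; lra. Qed.

Lemma one_le_Rpower_Rmax x e : 0 <= e -> 1 <= Rpower (Rmax 1 x) e.
Proof.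
  intros He; rewrite <- (Rpower_1_l e) at 1.
  apply Rle_Rpower_l; [exact He | split; [lra | apply Rmax_l]].
Qed.

Lemma exists_le_div_pow q r x : 0 < q < 1 -> 0 < r -> exists N, x <= r / q ^ N.
Proof.
  intros Hq Hr.
  destruct (pow_lt_1_zero q ltac:(rewrite Rabs_pos_eq; lra) (r / (Rabs x + 1))) as [N HN].
  { apply Rdiv_lt_0_compat; [exact Hr|]; pose proof (Rabs_pos x); lra. }
  exists N; specialize (HN N (le_n N)); rewrite Rabs_pos_eq in HN by (apply pow_le; lra).
  pose proof (pow_lt q N ltac:(lra)); pose proof (Rabs_pos x); pose proof (Rle_abs x).
  apply (Rmult_lt_compat_r (Rabs x + 1)) in HN; [| lra].
  unfold Rdiv in HN; rewrite Rmult_assoc, Rinv_l, Rmult_1_r in HN by lra.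
  apply (Rmult_le_reg_r (q ^ N)); [exact H|].
  unfold Rdiv; rewrite Rmult_assoc, Rinv_l, Rmult_1_r by lra; nra.
Qed.

(* Induction on the number of contractions [w |-> q w] needed to bring [w] into the disc of
   radius [r]. *)
Lemma scaling_induction (q r : R) (S P : C -> Prop) :
  0 < q < 1 -> 0 < r ->
  (forall w, S w -> S (RtoC q * w)%C) ->
  (forall w, S w -> Cmod w <= r -> P w) ->
  (forall w, S w -> r < Cmod w -> P (RtoC q * w)%C -> P w) ->
  forall w, S w -> P w.
Proof.
  intros Hq Hr HS Hsmall Hstep.
  assert (Hscale : forall N w, S w -> Cmod w <= r / q ^ N -> P w).
  { induction N as [|N IH]; intros w Hw Hle.
    - apply Hsmall; [exact Hw|]; simpl in Hle; lra.
    - destruct (Rle_lt_dec (Cmod w) r) as [Hs | Hl]; [now apply Hsmall|].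
      apply Hstep; [exact Hw | exact Hl|]; apply IH; [now apply HS|].
      rewrite Cmod_RtoC_mult by lra; simpl in Hle.
      pose proof (pow_lt q N ltac:(lra)).
      apply (Rmult_le_compat_l q) in Hle; [| lra].
      replace (q * (r / (q * q ^ N))) with (r / q ^ N) in Hle by (field; lra); exact Hle. }
  intros w Hw; destruct (exists_le_div_pow q r (Cmod w) Hq Hr) as [N HN]; eauto.
Qed.

(** * The distribution of [X_n] and its generating functions *)

Section Recursion.

Variable p : R.
Hypothesis hp0 : 0 < p.
Hypothesis hpq : p <= 1 - p.

Lemma one_minus_pow_pos m : 0 < 1 - (1 - p) ^ S m.
Proof. pose proof (pow_lt_1_compat (1 - p) (S m) ltac:(lra) ltac:(lia)); lra. Qed.

Lemma probI_nonneg m j : 0 <= probI p (S m) j.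
Proof.
  unfold probI; cbv zeta.
  assert (HC : 0 < Binomial.C (S m) j).
  { unfold Binomial.C; apply Rdiv_lt_0_compat;
      [| apply Rmult_lt_0_compat]; apply INR_fact_lt_0. }
  assert (Hdiff : 0 <= p ^ j * (1 - p) ^ (S m - j) - p ^ j * (1 - p - p) ^ (S m - j)).
  { pose proof (pow_le p j ltac:(lra)).
    pose proof (pow_incr (1 - p - p) (1 - p) (S m - j) ltac:(lra)); nra. }
  pose proof (one_minus_pow_pos m).
  apply Rmult_le_pos; [apply Rmult_le_pos; lra | left; apply Rinv_0_lt_compat; lra].
Qed.

(* By the binomial formula, [sum_(j <= m) C(m+1,j) p^j b^(m+1-j) = (p + b)^(m+1) - p^(m+1)];
   the difference of the cases [b = q] and [b = q - p] is [1 - q^(m+1)]. *)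
Lemma sum_probI m : sum_f_R0 (probI p (S m)) m = 1.
Proof.
  pose proof (one_minus_pow_pos m) as HD.
  transitivity (sum_f_R0 (fun j => (Binomial.C (S m) j * p ^ j * (1 - p) ^ (S m - j)
     - Binomial.C (S m) j * p ^ j * (1 - p - p) ^ (S m - j)) * / (1 - (1 - p) ^ S m)) m).
  { apply sum_eq; intros j _; unfold probI, Rdiv; cbv zeta; ring. }
  rewrite <- scal_sum, minus_sum.
  pose proof (binomial p (1 - p) (S m)) as E1; pose proof (binomial p (1 - p - p) (S m)) as E2.
  rewrite tech5 in E1, E2.
  replace (p + (1 - p)) with 1 in E1 by ring; rewrite pow1 in E1.
  replace (p + (1 - p - p)) with (1 - p) in E2 by ring.
  rewrite Nat.sub_diag, C_n_n, pow_O in E1, E2.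
  set (S1 := sum_f_R0 (fun i => Binomial.C (S m) i * p ^ i * (1 - p) ^ (S m - i)) m) in *.
  set (S2 := sum_f_R0 (fun i => Binomial.C (S m) i * p ^ i * (1 - p - p) ^ (S m - i)) m) in *.
  replace S1 with (1 - p ^ S m) by lra; replace S2 with ((1 - p) ^ S m - p ^ S m) by lra.
  field; lra.
Qed.

Lemma probX_bounds k n : 0 <= probX p k n <= 1.
Proof.
  revert n; induction k as [|k IH]; intros [|m]; simpl; try lra.
  split.
  - apply cond_pos_sum; intros j; apply Rmult_le_pos; [apply probI_nonneg | apply IH].
  - rewrite <- (sum_probI m); apply sum_growing; intros j.
    pose proof (probI_nonneg m j); pose proof (IH j); nra.
Qed.

(* The [j]-th term of the [n]-th Taylor coefficient of [e^(b z) G_k(p z)]. *)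
Definition product_coef (k n : nat) (b : R) (j : nat) : R :=
  probX p k j / INR (Factorial.fact j) * p ^ j * (/ INR (Factorial.fact (n - j)) * b ^ (n - j)).

(* Taylor coefficients of [G_(k+1)(z) = G_(k+1)(q z) + (e^(q z) - e^((q-p) z)) G_k(p z)]. *)
Lemma probX_S_coef k n :
  probX p (S k) n / INR (Factorial.fact n) =
  probX p (S k) n / INR (Factorial.fact n) * (1 - p) ^ n +
  (sum_f_R0 (product_coef k n (1 - p)) n - sum_f_R0 (product_coef k n (1 - p - p)) n).
Proof.
  destruct n as [|m]; [unfold product_coef; simpl; ring|].
  rewrite <- minus_sum, tech5; unfold product_coef at 3 4.
  rewrite Nat.sub_diag; simpl pow at 3 4.
  pose proof (one_minus_pow_pos m) as HD.
  assert (E : probX p (S k) (S m) / INR (Factorial.fact (S m)) * (1 - (1 - p) ^ S m) =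
    sum_f_R0 (fun j => product_coef k (S m) (1 - p) j - product_coef k (S m) (1 - p - p) j) m).
  { simpl probX; unfold Rdiv at 1; rewrite Rmult_assoc, Rmult_comm, scal_sum.
    apply sum_eq; intros j Hj; unfold probI, product_coef, Binomial.C; cbv zeta.
    pose proof (INR_fact_neq_0 j); pose proof (INR_fact_neq_0 (S m));
      pose proof (INR_fact_neq_0 (S m - j)).
    field; repeat split; lra. }
  rewrite <- E, pow_O; simpl pow; ring.
Qed.

Lemma Cmod_Aterm_le k z n : Cmod (Aterm p k z n) <= Cmod (Cexp_term z n).
Proof.
  unfold Aterm, Cexp_term; rewrite !Cmod_mult, !Cmod_R, pow_n_Cpow.
  pose proof (probX_bounds k n).
  pose proof (Rinv_0_lt_compat _ (INR_fact_lt_0 n)).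
  apply Rmult_le_compat_r; [apply Cmod_ge_0|].
  unfold Rdiv; rewrite !Rabs_pos_eq by nra; nra.
Qed.

Lemma ex_series_Cmod_Aterm k z : ex_series (fun n => Cmod (Aterm p k z n)).
Proof.
  apply (ex_series_le (K := R_AbsRing) (V := R_CompleteNormedModule)
           _ (fun n => Cmod (Cexp_term z n))); [| apply ex_series_Cmod_Cexp_term].
  intros n; unfold norm; simpl; unfold abs; simpl.
  rewrite Rabs_pos_eq by apply Cmod_ge_0; apply Cmod_Aterm_le.
Qed.

Lemma is_CSeries_Aseries k z : is_CSeries (Aterm p k z) (Aseries p k z).
Proof. apply is_CSeries_CSeries, ex_series_Cmod_Aterm. Qed.

Lemma Cmod_Aseries_le k z : Cmod (Aseries p k z) <= exp (Cmod z).
Proof.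
  eapply Rle_trans; [apply (Cmod_CSeries_le _ _ (is_CSeries_Aseries k z)), ex_series_Cmod_Aterm|].
  rewrite <- (is_series_unique _ _ (is_series_exp (Cmod z))).
  apply Series_le; [| exists (exp (Cmod z)); apply is_series_exp].
  intros n; split; [apply Cmod_ge_0|]; rewrite <- Cmod_Cexp_term; apply Cmod_Aterm_le.
Qed.

Lemma Aseries_0 z : Aseries p 0 z = 1%C.
Proof.
  apply is_CSeries_unique.
  assert (Hterm : forall n, Aterm p 0 z n = match n with O => 1%C | S _ => 0%C end).
  { intros [|n]; unfold Aterm; simpl probX; rewrite pow_n_Cpow.
    - simpl; unfold Rdiv; rewrite Rinv_1, Rmult_1_l; ring.
    - unfold Rdiv; rewrite Rmult_0_l; ring. }
  split; apply is_series_decr_1; change (plus ?a (opp ?b)) with (a - b);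
    rewrite (Hterm O), Rminus_diag; (eapply is_series_ext; [| apply is_series_zero]);
    intros n; rewrite Hterm; reflexivity.
Qed.

Lemma Aterm_Cexp_term_product k b z n :
  sum_n (fun j => Aterm p k (RtoC p * z) j * Cexp_term (RtoC b * z) (n - j))%C n
  = (RtoC (sum_f_R0 (product_coef k n b) n) * z ^ n)%C.
Proof.
  rewrite <- sum_n_RtoC, (Cmult_comm _ (z ^ n)), <- sum_n_C_mult_l.
  apply sum_n_C_ext; intros j Hj.
  unfold Aterm, Cexp_term, product_coef; rewrite pow_n_Cpow, !Cpow_mult_l, <- !RtoC_pow.
  replace (z ^ n)%C with (z ^ j * z ^ (n - j))%C by (rewrite <- Cpow_add_r; f_equal; lia).
  rewrite !RtoC_mult; ring.
Qed.

Lemma Aseries_S k z :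
  Aseries p (S k) z =
  (Aseries p (S k) (RtoC (1 - p) * z)
   + (Cexp (RtoC (1 - p) * z) - Cexp (RtoC (1 - p - p) * z)) * Aseries p k (RtoC p * z))%C.
Proof.
  set (G := Aseries p k (RtoC p * z)).
  assert (Hprod : forall b, is_CSeries
    (fun n => sum_n (fun j => Aterm p k (RtoC p * z) j * Cexp_term (RtoC b * z) (n - j)) n)%C
    (G * Cexp (RtoC b * z))%C).
  { intros b; apply is_CSeries_Cauchy; [apply ex_series_Cmod_Aterm | apply ex_series_Cmod_Cexp_term
      | apply is_CSeries_Aseries | apply is_CSeries_Cexp]. }
  pose proof (is_CSeries_plus _ _ _ _ (is_CSeries_Aseries (S k) (RtoC (1 - p) * z))
    (is_CSeries_minus _ _ _ _ (Hprod (1 - p)) (Hprod (1 - p - p)))) as H.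
  apply is_CSeries_unique.
  replace (_ + _)%C with (Aseries p (S k) (RtoC (1 - p) * z)
    + (G * Cexp (RtoC (1 - p) * z) - G * Cexp (RtoC (1 - p - p) * z)))%C by ring.
  eapply is_CSeries_ext; [| exact H]; intros n; cbv beta.
  rewrite !Aterm_Cexp_term_product; unfold Aterm.
  symmetry; rewrite (probX_S_coef k n) at 1.
  rewrite !pow_n_Cpow, Cpow_mult_l, <- RtoC_pow, !RtoC_plus, !RtoC_minus, !RtoC_mult; ring.
Qed.

Lemma Atilde_S k z :
  Atilde p (S k) z =
  ((1 - Cexp (- (RtoC p * z))) * Atilde p k (RtoC p * z)
   + Cexp (- (RtoC p * z)) * Atilde p (S k) (RtoC (1 - p) * z))%C.
Proof.
  unfold Atilde; rewrite (Aseries_S k z).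
  set (E1 := Cexp (- (RtoC p * z))); set (E2 := Cexp (- (RtoC (1 - p) * z))).
  assert (H12 : Cexp (- z) = (E1 * E2)%C).
  { unfold E1, E2; rewrite <- Cexp_add; f_equal; rewrite RtoC_minus; ring. }
  assert (H2q : (E2 * Cexp (RtoC (1 - p) * z))%C = 1%C).
  { unfold E2; rewrite <- Cexp_add, <- Cexp_0; f_equal; ring. }
  assert (H2qp : (E2 * Cexp (RtoC (1 - p - p) * z))%C = E1).
  { unfold E1, E2; rewrite <- Cexp_add; f_equal; rewrite !RtoC_minus; ring. }
  rewrite H12.
  transitivity (E1 * E2 * Aseries p (S k) (RtoC (1 - p) * z)
    + (E1 * (E2 * Cexp (RtoC (1 - p) * z)) - E1 * (E2 * Cexp (RtoC (1 - p - p) * z)))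
      * Aseries p k (RtoC p * z))%C; [ring|].
  rewrite H2q, H2qp; ring.
Qed.

Lemma Cmod_Atilde_le k w : Cmod (Atilde p k w) <= exp (Cmod w - Re w).
Proof.
  unfold Atilde; rewrite Cmod_mult, Cmod_Cexp, Rminus_def, Rplus_comm, exp_plus.
  apply Rmult_le_compat_l; [left; apply exp_pos | apply Cmod_Aseries_le].
Qed.

Lemma Cexp_mul_Atilde k z : (Cexp z * Atilde p k z)%C = Aseries p k z.
Proof.
  unfold Atilde; rewrite Cmult_assoc, <- Cexp_add.
  replace (z + - z)%C with (RtoC 0) by ring; rewrite Cexp_0; ring.
Qed.

Lemma Cmod_Atilde_S_le k w :
  Cmod (Atilde p (S k) w) <=
  (1 + exp (- (p * Re w))) * Cmod (Atilde p k (RtoC p * w))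
  + exp (- (p * Re w)) * Cmod (Atilde p (S k) (RtoC (1 - p) * w)).
Proof.
  rewrite Atilde_S; eapply Rle_trans; [apply Cmod_triangle|].
  rewrite !Cmod_mult, Cmod_Cexp_neg_RtoC_mult.
  apply Rplus_le_compat_r, Rmult_le_compat_r; [apply Cmod_ge_0|].
  eapply Rle_trans; [apply Cmod_triangle|].
  rewrite Cmod_opp, Cmod_1, Cmod_Cexp_neg_RtoC_mult; lra.
Qed.

Lemma Cmod_Aseries_S_le k w :
  Cmod (Aseries p (S k) w) <=
  Cmod (Aseries p (S k) (RtoC (1 - p) * w))
  + (exp ((1 - p) * Re w) + exp ((1 - p - p) * Re w)) * exp (p * Cmod w).
Proof.
  rewrite Aseries_S; eapply Rle_trans; [apply Cmod_triangle|].
  apply Rplus_le_compat_l; rewrite Cmod_mult.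
  apply Rmult_le_compat; try apply Cmod_ge_0.
  - eapply Rle_trans; [apply Cmod_triangle|].
    rewrite Cmod_opp, !Cmod_Cexp, !Re_RtoC_mult; lra.
  - eapply Rle_trans; [apply Cmod_Aseries_le|].
    rewrite Cmod_RtoC_mult by lra; lra.
Qed.

(** * Growth bounds *)

Lemma sector_far_field (c a : R) : 0 < c -> 0 < a ->
  exists r, 0 < r /\ forall v, c * Cmod v <= Re v -> r < Cmod v ->
    1 <= p * Cmod v /\ exp (- (p * Re v)) <= a.
Proof.
  intros Hc Ha; exists (Rmax (/ p) (/ (a * (p * c)))).
  assert (Hr1 : / p <= Rmax (/ p) (/ (a * (p * c)))) by apply Rmax_l.
  assert (Hr2 : / (a * (p * c)) <= Rmax (/ p) (/ (a * (p * c)))) by apply Rmax_r.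
  pose proof (Rinv_0_lt_compat p hp0).
  split; [lra|]; intros v Hv Hvr; split.
  - assert (Hpv : / p <= Cmod v) by lra.
    apply (Rmult_le_compat_l p) in Hpv; [| lra]; rewrite Rinv_r in Hpv; lra.
  - assert (Hapc : 0 < a * (p * c)) by (apply Rmult_lt_0_compat; [| apply Rmult_lt_0_compat]; lra).
    assert (Ht : / a <= p * c * Cmod v).
    { assert (Hcv : / (a * (p * c)) <= Cmod v) by lra.
      apply (Rmult_le_compat_l (p * c)) in Hcv; [| nra].
      replace (p * c * / (a * (p * c))) with (/ a) in Hcv by (field; nra); exact Hcv. }
    rewrite <- (Rinv_inv a).
    eapply Rle_trans; [| apply (exp_neg_le_inv (p * c * Cmod v) _ (Rinv_0_lt_compat a Ha)); lra].
    apply exp_le; nra.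
Qed.

(* The factor [p^e] gained on [Atilde k (p v)] absorbs [x = |e^(-p v)|]:
   [(1 + x) p^e + x <= 1] as soon as [x <= (1 - p^e) / 2]. *)
Lemma Atilde_sector_step (e M : R) k v :
  0 < e -> 0 <= M -> 1 <= p * Cmod v ->
  exp (- (p * Re v)) <= (1 - Rpower p e) / 2 ->
  Cmod (Atilde p k (RtoC p * v)) <= M * Rpower (Rmax 1 (Cmod (RtoC p * v))) e ->
  Cmod (Atilde p (S k) (RtoC (1 - p) * v)) <=
    M * Rpower (Rmax 1 (Cmod (RtoC (1 - p) * v))) e ->
  Cmod (Atilde p (S k) v) <= M * Rpower (Rmax 1 (Cmod v)) e.
Proof.
  intros He HM Hv1 Hx Hk Hq.
  set (b := Rpower p e) in *; set (P := Rpower (Cmod v) e); set (x := exp (- (p * Re v))) in *.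
  assert (Hb : b < 1) by (apply Rpower_lt_1; lra).
  assert (Hv : 1 <= Cmod v) by nra.
  rewrite !Cmod_RtoC_mult, (Rmax_right 1 (p * Cmod v)) in * by lra.
  rewrite <- Rpower_mult_distr in Hk by lra; fold b P in Hk.
  assert (HqP : Rpower (Rmax 1 ((1 - p) * Cmod v)) e <= P).
  { apply Rle_Rpower_l; [lra|]; split; [apply Rlt_le_trans with 1; [lra | apply Rmax_l]|].
    apply Rmax_lub; nra. }
  rewrite Rmax_right by lra; fold P.
  eapply Rle_trans; [apply Cmod_Atilde_S_le|]; fold x.
  assert (0 < x) by apply exp_pos; assert (0 < P) by apply exp_pos; assert (0 < b) by apply exp_pos.
  apply Rle_trans with ((1 + x) * (M * (b * P)) + x * (M * P)).
  - apply Rplus_le_compat; apply Rmult_le_compat_l; nra.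
  - assert ((1 + x) * b + x <= 1) by nra; assert (0 <= M * P) by nra; nra.
Qed.

Lemma Atilde_sector_bound (c e : R) : 0 < c -> 0 < e ->
  exists M, forall k w, c * Cmod w <= Re w ->
    Cmod (Atilde p k w) <= M * Rpower (Rmax 1 (Cmod w)) e.
Proof.
  intros Hc He.
  assert (Hb : 0 < (1 - Rpower p e) / 2) by (pose proof (Rpower_lt_1 p e ltac:(lra) He); lra).
  destruct (sector_far_field c _ Hc Hb) as [r [Hr Hfar]].
  assert (Hsector : forall w, c * Cmod w <= Re w -> 0 <= Re w)
    by (intros w Hw; pose proof (Cmod_ge_0 w); nra).
  assert (HM : 1 <= exp r) by (apply one_le_exp; lra).
  exists (exp r); intros k; induction k as [|k IH]; intros w Hw;
    pose proof (one_le_Rpower_Rmax (Cmod w) e ltac:(lra)).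
  - unfold Atilde; rewrite Aseries_0, Cmult_1_r, Cmod_Cexp.
    replace (Re (- w)) with (- Re w) by (unfold Re; simpl; ring).
    assert (exp (- Re w) <= 1) by (apply exp_le_one; pose proof (Hsector w Hw); lra).
    nra.
  - apply (scaling_induction (1 - p) r (fun w => c * Cmod w <= Re w)
             (fun w => Cmod (Atilde p (S k) w) <= exp r * Rpower (Rmax 1 (Cmod w)) e));
      [lra | exact Hr | | | | exact Hw].
    + intros v Hv; rewrite Cmod_RtoC_mult, Re_RtoC_mult by lra; nra.
    + intros v Hv Hvr; eapply Rle_trans; [apply Cmod_Atilde_le|].
      pose proof (one_le_Rpower_Rmax (Cmod v) e ltac:(lra)); pose proof (Hsector v Hv).
      assert (exp (Cmod v - Re v) <= exp r) by (apply exp_le; lra); nra.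
    + intros v Hv Hvr IHq; destruct (Hfar v Hv Hvr) as [Hv1 Hx].
      apply Atilde_sector_step; try lra; apply IH.
      rewrite Cmod_RtoC_mult, Re_RtoC_mult by lra; nra.
Qed.

(* [G_(k+1)(q v)] contributes at most half of the bound since [(1 - e) p |v| >= 1]; the other
   term is [O(e^((q c + p)|v|))], and [q c + p = 1 - q (1 - c) <= 1 - e]. *)
Lemma Aseries_outside_step (c e K : R) k v :
  0 <= c -> 0 < e <= 1 / 2 -> e <= (1 - p) * (1 - c) -> 4 <= K ->
  Re v <= c * Cmod v -> 2 <= p * Cmod v ->
  Cmod (Aseries p (S k) (RtoC (1 - p) * v)) <= K * exp ((1 - e) * Cmod (RtoC (1 - p) * v)) ->
  Cmod (Aseries p (S k) v) <= K * exp ((1 - e) * Cmod v).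
Proof.
  intros Hc He Hec HK Hv Hpv Hq.
  pose proof (Cmod_ge_0 v).
  set (A := (1 - e) * Cmod v).
  rewrite Cmod_RtoC_mult in Hq by lra.
  assert (Hhalf : exp ((1 - e) * ((1 - p) * Cmod v)) <= exp A * / 2).
  { replace ((1 - e) * ((1 - p) * Cmod v)) with (A + - ((1 - e) * (p * Cmod v))) by (unfold A; ring).
    rewrite exp_plus; apply Rmult_le_compat_l; [left; apply exp_pos|].
    apply exp_neg_le_inv; nra. }
  assert (Hrest : (exp ((1 - p) * Re v) + exp ((1 - p - p) * Re v)) * exp (p * Cmod v)
                  <= 2 * exp A).
  { assert (Hsum : (1 - p) * c * Cmod v + p * Cmod v <= A) by (unfold A; nra).
    assert (H1 : exp ((1 - p) * Re v) <= exp ((1 - p) * c * Cmod v)) by (apply exp_le; nra).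
    assert (H2 : exp ((1 - p - p) * Re v) <= exp ((1 - p) * c * Cmod v)).
    { apply exp_le; assert (0 <= c * Cmod v) by nra.
      apply Rle_trans with ((1 - p - p) * (c * Cmod v)); [apply Rmult_le_compat_l|]; nra. }
    assert (H3 : exp ((1 - p) * c * Cmod v) * exp (p * Cmod v) <= exp A)
      by (rewrite <- exp_plus; apply exp_le, Hsum).
    pose proof (exp_pos (p * Cmod v)); nra. }
  eapply Rle_trans; [apply Cmod_Aseries_S_le|].
  pose proof (exp_pos A); nra.
Qed.

Lemma Aseries_outside_sector_bound (c e : R) :
  0 <= c -> 0 < e <= 1 / 2 -> e <= (1 - p) * (1 - c) ->
  exists K, forall k w, Re w <= c * Cmod w -> Cmod (Aseries p k w) <= K * exp ((1 - e) * Cmod w).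
Proof.
  intros Hc He Hec.
  set (r := 2 / p); set (K := Rmax 4 (exp r)).
  assert (HK4 : 4 <= K) by apply Rmax_l; assert (HKr : exp r <= K) by apply Rmax_r.
  assert (Hexp1 : forall w, 1 <= exp ((1 - e) * Cmod w)).
  { intros w; apply one_le_exp; pose proof (Cmod_ge_0 w); nra. }
  exists K; intros [|k] w Hw.
  - rewrite Aseries_0, Cmod_1; pose proof (Hexp1 w); nra.
  - apply (scaling_induction (1 - p) r (fun w => Re w <= c * Cmod w)
             (fun w => Cmod (Aseries p (S k) w) <= K * exp ((1 - e) * Cmod w)));
      [lra | unfold r; apply Rdiv_lt_0_compat; lra | | | | exact Hw].
    + intros v Hv; rewrite Cmod_RtoC_mult, Re_RtoC_mult by lra; nra.
    + intros v _ Hvr; eapply Rle_trans; [apply Cmod_Aseries_le|].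
      pose proof (Hexp1 v); assert (exp (Cmod v) <= exp r) by (apply exp_le, Hvr); nra.
    + intros v Hv Hvr IHq; apply (Aseries_outside_step c); auto.
      apply (Rmult_lt_compat_l p) in Hvr; [| exact hp0].
      unfold r in Hvr; replace (p * (2 / p)) with 2 in Hvr by (field; lra); lra.
Qed.

End Recursion.

Lemma has_arg_Re z t : has_arg z t -> Re z = Cmod z * cos t.
Proof. intros H; rewrite H at 1; reflexivity. Qed.

Lemma cos_Rabs t : cos (Rabs t) = cos t.
Proof. destruct (Rcase_abs t); [rewrite Rabs_left, cos_neg | rewrite Rabs_right]; auto. Qed.

Theorem mainTheorem7 (p : R) (hp0 : 0 < p) (hpq : p <= 1 - p)
  (eps : R) (heps0 : 0 < eps) (heps1 : eps < PI / 2) :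
  exists eps' : R, 0 < eps' < 1 /\
  exists K1 K2 : R,
    forall (k : nat) (z : C), 1 <= Cmod z ->
      ((exists theta, has_arg z theta /\ Rabs theta <= eps) ->
         Cmod (Atilde p k z) <= K1 * Rpower (Cmod z) eps') /\
      ((exists theta, has_arg z theta /\ eps <= Rabs theta <= PI) ->
         Cmod (Cmult (Cexp z) (Atilde p k z)) <= K2 * exp ((1 - eps') * Cmod z)).
Proof.
  pose proof PI_RGT_0.
  set (c := cos eps).
  assert (Hc : 0 < c < 1).
  { split; [apply cos_gt_0 | rewrite <- cos_0; apply cos_decreasing_1]; lra. }
  set (e := Rmin (1 / 2) ((1 - p) * (1 - c))).
  assert (He : 0 < e <= 1 / 2).
  { split; [apply Rmin_glb_lt; [| apply Rmult_lt_0_compat] | apply Rmin_l]; lra. }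
  destruct (Atilde_sector_bound p hp0 hpq c e) as [M HM]; try lra.
  destruct (Aseries_outside_sector_bound p hp0 hpq c e) as [K HK]; try apply Rmin_r; try lra.
  exists e; split; [lra|]; exists M, K; intros k z Hz; pose proof (Cmod_ge_0 z).
  split; intros [t [Ht Hteps]]; pose proof (has_arg_Re z t Ht) as Hre;
    rewrite <- cos_Rabs in Hre; pose proof (Rabs_pos t).
  - assert (c <= cos (Rabs t)) by (apply cos_decr_1; lra).
    rewrite <- (Rmax_right 1 (Cmod z)) by exact Hz; apply HM; nra.
  - assert (cos (Rabs t) <= c) by (apply cos_decr_1; lra).
    rewrite Cexp_mul_Atilde by assumption; apply HK; nra.
Qed.
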